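(* Let $(x,y,z,v)(t)$ be a normal extremal ($M=1$) starting at the identity with $\varphi_4\neq0$, and suppose $\theta(t)$ is constant on a non-degenerate interval $J\subset\mathbb R$. Let $t_0$ be the point of $\overline J$ closest to $0$ and $y_0=y(t_0)$, $z_0=z(t_0)$, $v_0=v(t_0)$. Then for $t\in J$: $$x(t)\equiv-\frac{\varphi_3}{\varphi_4},\quad y(t)=y_0+\frac{2\varphi_4(t-t_0)}{2\varphi_2\varphi_4-\varphi_3^2},\quad z(t)=z_0+\frac{\varphi_3(t-t_0)}{\varphi_3^2-2\varphi_2\varphi_4},\quad v(t)=v_0+\frac{\varphi_3^2(t-t_0)}{6\varphi_4(2\varphi_2\varphi_4-\varphi_3^2)},$$ where $v_0$ is determined from $x_0=-\varphi_3/\varphi_4$, $y_0$, $z_0$ by $\varphi_1x_0+\varphi_2y_0+(2\varphi_3+\tfrac12\varphi_4x_0)z_0+3\varphi_4v_0=t_0$. In particular, if $\varphi_3=0$ then on $J$: $x\equiv0$, $y(t)=y_0+(t-t_0)/\varphi_2$, $z\equiv z_0$, $v\equiv v_0=(t_0-\varphi_2y_0)/(3\varphi_4)$.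
   Context: Let $\mathfrak g$ be the Engel algebra with basis $X,Y,Z,V$, $[X,Y]=Z$, $[X,Z]=V$, all other brackets of basis elements zero; $G$ the corresponding connected simply connected Lie group, with coordinates of the first kind $(x,y,z,v)$ (identity $=0$). Let $F$ be an arbitrary norm on $\mathbb R^2$, $U=\{u:F(u)\le1\}$, $(u_1,u_2)\leftrightarrow u_1X(e)+u_2Y(e)$. The control system is $\dot x=u_1,\ \dot y=u_2,\ \dot z=\tfrac12(xu_2-yu_1),\ \dot v=-\tfrac12(z+\tfrac16xy)u_1+\tfrac1{12}x^2u_2$, measurable $u(t)\in U$, $x(0)=y(0)=z(0)=v(0)=0$. An extremal is a trajectory with control $u(t)$ for which there is a nowhere vanishing absolutely continuous $\psi=(\psi_1,\dots,\psi_4)$ with a.e. $\dot\psi_1=\tfrac1{12}\psi_4yu_1-(\tfrac12\psi_3+\tfrac16\psi_4x)u_2$, $\dot\psi_2=(\tfrac12\psi_3+\tfrac1{12}\psi_4x)u_1$, $\dot\psi_3=\tfrac12\psi_4u_1$, $\dot\psi_4=0$ and $h_1u_1(t)+h_2u_2(t)=\max_{u\in U}(h_1u_1+h_2u_2)=M$ a.e., with $h_1=\psi_1-\tfrac12\psi_3y-\tfrac1{12}\psi_4xy-\tfrac12\psi_4z$, $h_2=\psi_2+\tfrac12\psi_3x+\tfrac1{12}\psi_4x^2$, $M\ge0$ constant; normal means $M>0$, normalized to $M=1$. $\varphi_i=\psi_i(0)$. $F_U(h)=\max_{u\in U}h\cdot u$, $U^*=\{h:F_U(h)\le1\}$; $r(\theta)>0$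 with $F_U(r(\theta)\cos\theta,r(\theta)\sin\theta)=1$ is the polar equation of $\partial U^*$. For $M=1$, $\theta(t)$ is a continuous function with $(h_1(t),h_2(t))=r(\theta(t))(\cos\theta(t),\sin\theta(t))$. *)

From Stdlib Require Import Reals Lra.
Open Scope R_scope.

Fixpoint rsum (n : nat) (g : nat -> R) : R :=
  match n with O => 0 | S m => rsum m g + g m end.

Definition null_set (N : R -> Prop) : Prop :=
  forall eps, 0 < eps ->
    exists a b : nat -> R,
      (forall n, a n <= b n) /\
      (forall t, N t -> exists n, a n < t < b n) /\
      (forall n, rsum n (fun k => b k - a k) < eps).

Definition ae (P : R -> Prop) : Prop :=
  exists N, null_set N /\ forall t, ~ N t -> P t.

Definition ac_on (f : R -> R) (a b : R) : Prop :=
  forall eps, 0 < eps -> exists delta, 0 < delta /\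
    forall (n : nat) (c d : nat -> R),
      (forall i, (i < n)%nat -> a <= c i /\ c i <= d i /\ d i <= b) ->
      (forall i j, (i < j)%nat -> (j < n)%nat -> d i <= c j) ->
      rsum n (fun i => d i - c i) < delta ->
      rsum n (fun i => Rabs (f (d i) - f (c i))) < eps.

Definition loc_ac (f : R -> R) : Prop :=
  forall a b, a <= b -> ac_on f a b.

Definition is_norm2 (F : R -> R -> R) : Prop :=
  (forall a b, F a b = 0 -> a = 0 /\ b = 0) /\
  (forall k a b, F (k * a) (k * b) = Rabs k * F a b) /\
  (forall a b c d, F (a + c) (b + d) <= F a b + F c d).

Definition inU (F : R -> R -> R) (u1 u2 : R) : Prop := F u1 u2 <= 1.

Definition is_FU (F : R -> R -> R) (h1 h2 m : R) : Prop :=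
  (exists u1 u2, inU F u1 u2 /\ h1 * u1 + h2 * u2 = m) /\
  (forall u1 u2, inU F u1 u2 -> h1 * u1 + h2 * u2 <= m).

Definition is_r (F : R -> R -> R) (th rho : R) : Prop :=
  0 < rho /\ is_FU F (rho * cos th) (rho * sin th) 1.

Definition hh1 (p1 p3 p4 x y z : R) : R :=
  p1 - / 2 * p3 * y - / 12 * p4 * x * y - / 2 * p4 * z.
Definition hh2 (p2 p3 p4 x : R) : R :=
  p2 + / 2 * p3 * x + / 12 * p4 * x * x.

(* (x,y,z,v) with control (u1,u2) is a normal (M = 1) extremal starting
   at the identity, with adjoint psi = (p1,p2,p3,p4). *)
Definition normal_extremal (F : R -> R -> R)
    (u1 u2 x y z v p1 p2 p3 p4 : R -> R) : Prop :=
  (forall t, inU F (u1 t) (u2 t)) /\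
  x 0 = 0 /\ y 0 = 0 /\ z 0 = 0 /\ v 0 = 0 /\
  loc_ac x /\ loc_ac y /\ loc_ac z /\ loc_ac v /\
  loc_ac p1 /\ loc_ac p2 /\ loc_ac p3 /\ loc_ac p4 /\
  (forall t, ~ (p1 t = 0 /\ p2 t = 0 /\ p3 t = 0 /\ p4 t = 0)) /\
  ae (fun t =>
    derivable_pt_lim x t (u1 t) /\
    derivable_pt_lim y t (u2 t) /\
    derivable_pt_lim z t (/ 2 * (x t * u2 t - y t * u1 t)) /\
    derivable_pt_lim v t
      (- / 2 * (z t + / 6 * x t * y t) * u1 t + / 12 * x t ^ 2 * u2 t) /\
    derivable_pt_lim p1 t
      (/ 12 * p4 t * y t * u1 t - (/ 2 * p3 t + / 6 * p4 t * x t) * u2 t) /\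
    derivable_pt_lim p2 t ((/ 2 * p3 t + / 12 * p4 t * x t) * u1 t) /\
    derivable_pt_lim p3 t (/ 2 * p4 t * u1 t) /\
    derivable_pt_lim p4 t 0 /\
    (let h1 := hh1 (p1 t) (p3 t) (p4 t) (x t) (y t) (z t) in
     let h2 := hh2 (p2 t) (p3 t) (p4 t) (x t) in
     h1 * u1 t + h2 * u2 t = 1 /\
     forall w1 w2, inU F w1 w2 -> h1 * w1 + h2 * w2 <= 1)).

Definition nondeg_interval (J : R -> Prop) : Prop :=
  (forall a b c, J a -> J b -> a <= c <= b -> J c) /\
  (exists a b, J a /\ J b /\ a < b).

Definition in_closure (J : R -> Prop) (t : R) : Prop :=
  forall eps, 0 < eps -> exists s, J s /\ Rabs (s - t) < eps.

(* Along a normal extremal the adjoint equations have the first integrals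
   psi4 = phi4, psi3 = phi3 + phi4 x / 2, ..., and the condition h . u = 1 then
   integrates to phi1 x + phi2 y + (2 phi3 + phi4 x / 2) z + 3 phi4 v = t.
   Moreover h1' = - w u2 and h2' = w u1 with w = psi3 + psi4 x / 2 = phi3 + phi4 x.
   If theta is constant on J, then so is h (the radius r(theta) is unique), so
   w = w (h . u) = 0 there, i.e. x = - phi3 / phi4; consequently u1 = 0 and
   u2 = 1 / h2 = 2 phi4 / (2 phi2 phi4 - phi3^2), and y, z, v grow linearly.
   Every integration step uses only that an absolutely continuous function with
   zero derivative off a null set is constant, proved by a creeping argument
   against a cover of the null set of small total length. *)

From Stdlib Require Import Reals Lra Lia List Classical.
Open Scope R_scope.

Lemma rsum_shift n g : rsum (S n) g = g 0%nat + rsum n (fun i => g (S i)).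
Proof. revert g; induction n as [|n IH]; intros g; simpl in *; [ring|rewrite IH; simpl; ring]. Qed.

Lemma rsum_le n g h : (forall i, (i < n)%nat -> g i <= h i) -> rsum n g <= rsum n h.
Proof.
  induction n as [|n IH]; intros Hgh; simpl; [lra|].
  assert (rsum n g <= rsum n h) by (apply IH; intros; apply Hgh; lia).
  assert (g n <= h n) by (apply Hgh; lia). lra.
Qed.

Lemma rsum_plus n g h : rsum n (fun i => g i + h i) = rsum n g + rsum n h.
Proof. induction n as [|n IH]; simpl; [ring|rewrite IH; ring]. Qed.

Lemma rsum_scal n k g : rsum n (fun i => k * g i) = k * rsum n g.
Proof. induction n as [|n IH]; simpl; [ring|rewrite IH; ring]. Qed.

Fixpoint chain (al : R) (L : list (R * R)) : Prop :=
  match L with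
  | nil => True
  | p :: L' => al <= fst p /\ fst p <= snd p /\ chain (snd p) L'
  end.

Definition lsum (g : R * R -> R) (L : list (R * R)) : R :=
  fold_right (fun p acc => g p + acc) 0 L.

Definition len (p : R * R) : R := snd p - fst p.

Definition jump (f : R -> R) (p : R * R) : R := Rabs (f (snd p) - f (fst p)).

Definition covered_by (A B : nat -> R) (K : nat) (L : list (R * R)) : Prop :=
  forall p, In p L -> exists k, (k < K)%nat /\ A k < fst p /\ snd p < B k.

Lemma rsum_nth_lsum g L d0 : rsum (length L) (fun i => g (nth i L d0)) = lsum g L.
Proof.
  induction L as [|p L IH]; [reflexivity|].
  change (length (p :: L)) with (S (length L)). rewrite rsum_shift. simpl. now rewrite IH.
Qed.

Lemma lsum_app g L1 L2 : lsum g (L1 ++ L2) = lsum g L1 + lsum g L2.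
Proof. induction L1 as [|p L1 IH]; simpl; [ring|rewrite IH; ring]. Qed.

Lemma lsum_filter g q L :
  lsum g L = lsum g (filter q L) + lsum g (filter (fun p => negb (q p)) L).
Proof. induction L as [|p L IH]; simpl; [ring|destruct (q p); simpl; rewrite IH; ring]. Qed.

Lemma chain_lower al be L : chain al L -> (forall p, In p L -> be <= fst p) -> chain be L.
Proof. destruct L as [|p L]; simpl; [auto|]. intros (_ & Hp & HL) Hbe. auto. Qed.

Lemma chain_weaken al be L : chain be L -> al <= be -> chain al L.
Proof. destruct L as [|p L]; simpl; [auto|]. intros (Hp & Hpp & HL) Hab. repeat split; auto; lra. Qed.

Lemma chain_filter q al L : chain al L -> chain al (filter q L).
Proof.
  revert al; induction L as [|p L IH]; intros al; simpl; [auto|].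
  intros (Hal & Hp & HL). destruct (q p); simpl; [auto|].
  apply chain_weaken with (snd p); [auto|lra].
Qed.

Lemma chain_snoc al L s t :
  chain al L -> Forall (fun p => snd p <= s) L -> al <= s -> s <= t -> chain al (L ++ (s, t) :: nil).
Proof.
  revert al; induction L as [|p L IH]; intros al HL HF Has Hst; simpl in *; [auto|].
  destruct HL as (Hal & Hp & HL). inversion HF; subst. auto.
Qed.

Lemma chain_nth al L i : chain al L -> (i < length L)%nat ->
  al <= fst (nth i L (0, 0)) <= snd (nth i L (0, 0)).
Proof.
  revert al i; induction L as [|p L IH]; intros al i HL Hi; simpl in *; [lia|].
  destruct HL as (Hal & Hp & HL). destruct i as [|i]; [lra|].
  destruct (IH _ i HL) as [? ?]; [lia|lra].
Qed.

Lemma chain_nth_ordered al L i j : chain al L -> (i < j)%nat -> (j < length L)%nat ->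
  snd (nth i L (0, 0)) <= fst (nth j L (0, 0)).
Proof.
  revert al i j; induction L as [|p L IH]; intros al i j HL Hij Hj; simpl in *; [lia|].
  destruct HL as (Hal & Hp & HL). destruct j as [|j]; [lia|]. destruct i as [|i].
  - apply (chain_nth _ _ j HL); lia.
  - apply (IH _ i j HL); lia.
Qed.

Lemma lsum_len_chain al be L :
  chain al L -> Forall (fun p => snd p <= be) L -> al <= be -> lsum len L <= be - al.
Proof.
  revert al; induction L as [|p L IH]; intros al HL HF Hab; simpl in *; [lra|].
  destruct HL as (Hal & Hp & HL). inversion HF; subst.
  assert (lsum len L <= be - snd p) by auto. unfold len at 1. lra.
Qed.

Definition inside (lo hi : R) (p : R * R) : bool :=
  if Rlt_dec lo (fst p) then if Rlt_dec (snd p) hi then true else false else false.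

Lemma inside_spec lo hi p : inside lo hi p = true <-> lo < fst p /\ snd p < hi.
Proof.
  unfold inside; destruct (Rlt_dec lo (fst p)), (Rlt_dec (snd p) hi);
    split; intros H; try discriminate; tauto.
Qed.

(* Each cover interval contains a chain of total length at most its own. *)
Lemma lsum_len_le_cover (A B : nat -> R) K al L :
  (forall k, A k <= B k) -> chain al L -> covered_by A B K L ->
  lsum len L <= rsum K (fun k => B k - A k).
Proof.
  intros HAB. revert L; induction K as [|K IH]; intros L HL Hcov.
  - destruct L as [|p L]; [simpl; lra|].
    destruct (Hcov p (in_eq p L)) as (k & Hk & _); lia.
  - rewrite (lsum_filter len (inside (A K) (B K)) L); simpl rsum.
    assert (lsum len (filter (inside (A K) (B K)) L) <= B K - A K).
    { pose proof (HAB K).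
      apply lsum_len_chain; [|apply Forall_forall|lra].
      - apply chain_lower with al; [now apply chain_filter|].
        intros p Hp. apply filter_In, proj2, inside_spec in Hp. lra.
      - intros p Hp. apply filter_In, proj2, inside_spec in Hp. lra. }
    enough (lsum len (filter (fun p => negb (inside (A K) (B K) p)) L)
              <= rsum K (fun k => B k - A k)) by lra.
    apply IH; [now apply chain_filter|].
    intros p Hp. apply filter_In in Hp as [Hp Hout].
    destruct (Hcov p Hp) as (k & Hk & Hin). exists k; split; [|exact Hin].
    destruct (Nat.eq_dec k K) as [->|]; [|lia].
    apply Bool.negb_true_iff, Bool.not_true_iff_false in Hout.
    exfalso; apply Hout, inside_spec, Hin.
Qed.

Lemma ac_on_lsum f a b : ac_on f a b -> forall eps, 0 < eps -> exists delta, 0 < delta /\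
  forall L, chain a L -> Forall (fun p => snd p <= b) L -> lsum len L < delta ->
  lsum (jump f) L < eps.
Proof.
  intros Hac eps Heps. destruct (Hac eps Heps) as (delta & Hdelta & H).
  exists delta; split; [exact Hdelta|]. intros L HL HF Hlen.
  rewrite <- (rsum_nth_lsum _ L (0, 0)). apply H.
  - intros i Hi. destruct (chain_nth a L i HL Hi).
    rewrite Forall_forall in HF. pose proof (HF _ (nth_In L (0, 0) Hi)). lra.
  - intros i j Hij Hj. apply (chain_nth_ordered a L); auto.
  - now rewrite <- (rsum_nth_lsum len L (0, 0)) in Hlen.
Qed.

(** * Zero derivative almost everywhere *)

Lemma null_set_add_point N c : null_set N -> null_set (fun t => t = c \/ N t).
Proof.
  intros HN eps Heps.
  destruct (HN (eps / 2)) as (A & B & HAB & Hcov & Hsum); [lra|].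
  exists (fun k => match k with O => c - eps / 8 | S k => A k end),
         (fun k => match k with O => c + eps / 8 | S k => B k end).
  split; [|split].
  - intros [|k]; [lra|apply HAB].
  - intros t [->|Ht]; [exists O; lra|].
    destruct (Hcov t Ht) as [k Hk]. now exists (S k).
  - intros [|n]; [simpl; lra|].
    rewrite rsum_shift; simpl. specialize (Hsum n). lra.
Qed.

Lemma lub_approx (E : R -> Prop) m : is_lub E m ->
  forall e, 0 < e -> exists s, E s /\ m - e < s <= m.
Proof.
  intros [Hub Hleast] e He. apply NNPP; intros Hno.
  enough (m <= m - e) by lra.
  apply Hleast. intros s Hs. apply Rnot_lt_le. intros Hlt.
  apply Hno. exists s. split; [exact Hs|]. split; [lra|]. now apply Hub.
Qed.

Lemma deriv0_local_bound f m eta : derivable_pt_lim f m 0 -> 0 < eta ->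
  exists del, 0 < del /\
    forall t, Rabs (t - m) < del -> Rabs (f t - f m) <= eta * Rabs (t - m).
Proof.
  intros Hd Heta. destruct (Hd eta Heta) as [del Hdel].
  exists del; split; [apply cond_pos|]. intros t Ht.
  destruct (Req_dec t m) as [->|Htm].
  - unfold Rminus. rewrite !Rplus_opp_r, Rabs_R0. lra.
  - specialize (Hdel (t - m) ltac:(lra) Ht).
    replace (m + (t - m)) with t in Hdel by ring. rewrite Rminus_0_r in Hdel.
    replace (f t - f m) with ((f t - f m) / (t - m) * (t - m)) by (field; lra).
    rewrite Rabs_mult. apply Rmult_le_compat_r; [apply Rabs_pos|lra].
Qed.

Section Creeping.

Variables (f : R -> R) (a eta : R) (A B : nat -> R).

(* [f] moves by at most [eta] per unit length from [a] to [s], except on a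
   chain of intervals inside the cover [(A k, B k)], where it moves by their jumps. *)
Definition reach (s : R) : Prop :=
  exists L K, chain a L /\ Forall (fun p => snd p <= s) L /\ covered_by A B K L /\
    Rabs (f s - f a) <= eta * (s - a) + lsum (jump f) L.

Lemma reach_start : reach a.
Proof.
  exists nil, O. simpl. repeat split; auto; [intros p []|].
  unfold Rminus. rewrite !Rplus_opp_r, Rabs_R0. lra.
Qed.

Lemma reach_slow s t : 0 <= eta -> reach s -> s <= t ->
  Rabs (f t - f s) <= eta * (t - s) -> reach t.
Proof.
  intros Heta (L & K & HL & HF & Hcov & Hs) Hst Hft.
  exists L, K. repeat split; auto.
  - rewrite Forall_forall in HF |- *. intros p Hp. specialize (HF p Hp). lra.
  - replace (f t - f a) with ((f t - f s) + (f s - f a)) by ring.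
    eapply Rle_trans; [apply Rabs_triang|lra].
Qed.

Lemma reach_covered s t k : 0 <= eta -> a <= s -> reach s -> s <= t ->
  A k < s -> t < B k -> reach t.
Proof.
  intros Heta Has (L & K & HL & HF & Hcov & Hs) Hst HAk HBk.
  exists (L ++ (s, t) :: nil), (Nat.max K (S k)). repeat split.
  - now apply chain_snoc.
  - apply Forall_app. split; [|constructor; [simpl; lra|constructor]].
    rewrite Forall_forall in HF |- *. intros p Hp. specialize (HF p Hp). lra.
  - intros p Hp. apply in_app_or in Hp as [Hp|[<-|[]]].
    + destruct (Hcov p Hp) as (k' & Hk' & Hin). exists k'. split; [lia|exact Hin].
    + exists k. simpl. split; [lia|lra].
  - rewrite lsum_app. unfold lsum at 2, jump at 2. simpl.
    replace (f t - f a) with ((f t - f s) + (f s - f a)) by ring.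
    assert (eta * (s - a) <= eta * (t - a)) by (apply Rmult_le_compat_l; lra).
    eapply Rle_trans; [apply Rabs_triang|lra].
Qed.

End Creeping.

Lemma reach_end f a b eta N (A B : nat -> R) : a <= b -> 0 < eta ->
  (forall t, N t -> exists k, A k < t < B k) ->
  (forall t, a <= t <= b -> ~ N t -> derivable_pt_lim f t 0) ->
  reach f a eta A B b.
Proof.
  intros Hab Heta Hcov Hd.
  set (P := fun s => a <= s <= b /\ reach f a eta A B s).
  assert (Pa : P a) by (split; [lra|apply reach_start]).
  destruct (completeness P) as [m Hm]; [exists b; intros s [Hs _]; lra|now exists a|].
  assert (Ham : a <= m) by now apply Hm.
  assert (Hmb : m <= b) by (apply Hm; intros s [Hs _]; lra).
  assert (Hpast : exists t, m <= t <= b /\ (m < b -> m < t) /\ P t).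
  { destruct (classic (N m)) as [HN|HN].
    - destruct (Hcov m HN) as (k & HAk & HBk).
      destruct (lub_approx P m Hm (m - A k)) as (s & [Hs Hreach] & Hsm); [lra|].
      exists (Rmin b ((m + B k) / 2)).
      assert (Rmin b ((m + B k) / 2) <= (m + B k) / 2) by apply Rmin_r.
      assert (m <= Rmin b ((m + B k) / 2)) by (apply Rmin_glb; lra).
      repeat split; try lra; [apply Rmin_l|intros; apply Rmin_glb_lt; lra|apply Rmin_l|].
      apply reach_covered with s k; lra || auto.
    - destruct (deriv0_local_bound f m eta (Hd m (conj Ham Hmb) HN) Heta)
        as (del & Hdel & Hloc).
      destruct (lub_approx P m Hm (del / 2)) as (s & [Hs Hreach] & Hsm); [lra|].
      set (t := Rmin b (m + del / 2)).
      assert (t <= m + del / 2) by apply Rmin_r.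
      assert (m <= t) by (apply Rmin_glb; lra).
      assert (t <= b) by apply Rmin_l.
      exists t. repeat split; try lra; [intros; apply Rmin_glb_lt; lra|].
      apply reach_slow with s; try lra; [exact Hreach|].
      assert (Rabs (f t - f m) <= eta * (t - m)).
      { rewrite <- (Rabs_right (t - m)) by lra. apply Hloc. rewrite Rabs_right; lra. }
      assert (Rabs (f s - f m) <= eta * (m - s)).
      { replace (m - s) with (Rabs (s - m)) by (rewrite Rabs_left1; lra).
        apply Hloc. rewrite Rabs_left1; lra. }
      replace (f t - f s) with ((f t - f m) - (f s - f m)) by ring.
      eapply Rle_trans; [apply Rabs_triang|]. rewrite Rabs_Ropp. lra. }
  destruct Hpast as (t & Ht & Hmt & Pt).
  assert (t <= m) by now apply Hm.
  replace b with t; [apply Pt|].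
  destruct (Rle_lt_dec b m); [lra|specialize (Hmt ltac:(lra)); lra].
Qed.

(* Adding [a] and [b] to the null set lets the creeping argument pass the
   endpoints, where no derivative is assumed. *)
Lemma ac_on_deriv0_eq f a b N : a <= b -> ac_on f a b -> null_set N ->
  (forall t, a < t < b -> ~ N t -> derivable_pt_lim f t 0) -> f a = f b.
Proof.
  intros Hab Hac HN Hd.
  set (N' := fun t => t = b \/ (t = a \/ N t)).
  assert (HN' : null_set N') by now apply null_set_add_point, null_set_add_point.
  assert (Hd' : forall t, a <= t <= b -> ~ N' t -> derivable_pt_lim f t 0).
  { intros t Ht HNt. apply Hd; [|intro; apply HNt; unfold N'; tauto].
    split; apply Rnot_le_lt; intros ?; apply HNt; unfold N'; lra. }
  assert (Hsmall : forall eta, 0 < eta -> Rabs (f b - f a) <= eta * (b - a) + eta).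
  { intros eta Heta.
    destruct (ac_on_lsum f a b Hac eta Heta) as (delta & Hdelta & Hvar).
    destruct (HN' delta Hdelta) as (A & B & HAB & Hcov & Hsum).
    destruct (reach_end f a b eta N' A B Hab Heta Hcov Hd')
      as (L & K & HL & HF & HLcov & Hb).
    pose proof (lsum_len_le_cover A B K a L HAB HL HLcov).
    specialize (Hsum K). specialize (Hvar L HL HF ltac:(lra)). lra. }
  apply NNPP; intros Hne.
  set (eta := Rabs (f b - f a) / (2 * (b - a + 1))).
  assert (Hpos : 0 < Rabs (f b - f a)) by (apply Rabs_pos_lt; lra).
  assert (Heta : 0 < eta) by (apply Rdiv_lt_0_compat; lra).
  specialize (Hsmall eta Heta).
  assert (eta * (b - a) + eta = Rabs (f b - f a) / 2) by (unfold eta; field; lra).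
  lra.
Qed.

Lemma ac_on_dominated h f g a b K1 K2 : 0 <= K1 -> 0 <= K2 -> ac_on f a b -> ac_on g a b ->
  (forall c d, a <= c -> c <= d -> d <= b ->
     Rabs (h d - h c) <= K1 * Rabs (f d - f c) + K2 * Rabs (g d - g c)) ->
  ac_on h a b.
Proof.
  intros HK1 HK2 Hf Hg Hh eps Heps.
  destruct (Hf (eps / (2 * (K1 + 1)))) as (d1 & Hd1 & H1); [apply Rdiv_lt_0_compat; lra|].
  destruct (Hg (eps / (2 * (K2 + 1)))) as (d2 & Hd2 & H2); [apply Rdiv_lt_0_compat; lra|].
  exists (Rmin d1 d2). split; [now apply Rmin_glb_lt|].
  intros n c d Hcd Hord Hs.
  specialize (H1 n c d Hcd Hord (Rlt_le_trans _ _ _ Hs (Rmin_l _ _))).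
  specialize (H2 n c d Hcd Hord (Rlt_le_trans _ _ _ Hs (Rmin_r _ _))).
  eapply Rle_lt_trans.
  { apply (rsum_le n _ (fun i => K1 * Rabs (f (d i) - f (c i)) + K2 * Rabs (g (d i) - g (c i)))).
    intros i Hi. destruct (Hcd i Hi) as (? & ? & ?). now apply Hh. }
  rewrite rsum_plus, !rsum_scal.
  assert (K1 * (eps / (2 * (K1 + 1))) < eps / 2)
    by (apply Rmult_lt_reg_r with (2 * (K1 + 1)); [lra|field_simplify; lra]).
  assert (K2 * (eps / (2 * (K2 + 1))) < eps / 2)
    by (apply Rmult_lt_reg_r with (2 * (K2 + 1)); [lra|field_simplify; lra]).
  assert (K1 * rsum n (fun i => Rabs (f (d i) - f (c i))) <= K1 * (eps / (2 * (K1 + 1))))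
    by (apply Rmult_le_compat_l; lra).
  assert (K2 * rsum n (fun i => Rabs (g (d i) - g (c i))) <= K2 * (eps / (2 * (K2 + 1))))
    by (apply Rmult_le_compat_l; lra).
  lra.
Qed.

Lemma loc_ac_const k : loc_ac (fun _ => k).
Proof.
  intros a b Hab eps Heps. exists 1. split; [lra|]. intros n c d _ _ _.
  enough (rsum n (fun i => Rabs (k - k)) = 0) by lra.
  induction n as [|n IH]; simpl; [reflexivity|].
  rewrite IH, Rminus_diag, Rabs_R0. ring.
Qed.

Lemma loc_ac_id : loc_ac (fun t => t).
Proof.
  intros a b Hab eps Heps. exists eps. split; [exact Heps|]. intros n c d Hcd _ Hs.
  eapply Rle_lt_trans; [|exact Hs]. apply rsum_le. intros i Hi.
  destruct (Hcd i Hi) as (? & ? & ?). rewrite Rabs_right; lra.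
Qed.

Lemma loc_ac_plus f g : loc_ac f -> loc_ac g -> loc_ac (fun t => f t + g t).
Proof.
  intros Hf Hg a b Hab. apply ac_on_dominated with f g 1 1; auto; try lra.
  intros c d _ _ _. replace (f d + g d - (f c + g c)) with ((f d - f c) + (g d - g c)) by ring.
  eapply Rle_trans; [apply Rabs_triang|lra].
Qed.

Lemma loc_ac_minus f g : loc_ac f -> loc_ac g -> loc_ac (fun t => f t - g t).
Proof.
  intros Hf Hg a b Hab. apply ac_on_dominated with f g 1 1; auto; try lra.
  intros c d _ _ _. replace (f d - g d - (f c - g c)) with ((f d - f c) - (g d - g c)) by ring.
  eapply Rle_trans; [apply Rabs_triang|rewrite Rabs_Ropp; lra].
Qed.

Lemma loc_ac_scal k f : loc_ac f -> loc_ac (fun t => k * f t).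
Proof.
  intros Hf a b Hab. apply ac_on_dominated with f f (Rabs k) 0; auto; try lra; [apply Rabs_pos|].
  intros c d _ _ _. replace (k * f d - k * f c) with (k * (f d - f c)) by ring.
  rewrite Rabs_mult. lra.
Qed.

Lemma loc_ac_continuity f : loc_ac f -> continuity f.
Proof.
  intros Hf c eps Heps. destruct (Hf (c - 1) (c + 1) ltac:(lra) eps Heps) as (del & Hdel & H).
  exists (Rmin del 1). split; [apply Rmin_glb_lt; lra|]. intros s [_ Hs]. simpl in *.
  unfold R_dist in *.
  pose proof (Rlt_le_trans _ _ _ Hs (Rmin_l _ _)) as Hs1.
  pose proof (Rlt_le_trans _ _ _ Hs (Rmin_r _ _)) as Hs2.
  apply Rabs_def2 in Hs1, Hs2.
  specialize (H 1%nat (fun _ => Rmin s c) (fun _ => Rmax s c)). simpl in H.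
  unfold Rmin, Rmax in H. destruct (Rle_dec s c).
  - rewrite <- Rabs_Ropp, Ropp_minus_distr. rewrite <- (Rplus_0_l (Rabs _)).
    apply H; intros; lra || lia.
  - rewrite <- (Rplus_0_l (Rabs _)). apply H; intros; lra || lia.
Qed.

Lemma loc_ac_bounded f a b : loc_ac f -> a <= b ->
  exists M, forall t, a <= t <= b -> Rabs (f t) <= M.
Proof.
  intros Hf Hab. pose proof (loc_ac_continuity f Hf) as Hc.
  destruct (continuity_ab_maj f a b Hab) as (tmax & Hmax & _); [intros; apply Hc|].
  destruct (continuity_ab_min f a b Hab) as (tmin & Hmin & _); [intros; apply Hc|].
  exists (Rabs (f tmax) + Rabs (f tmin)). intros t Ht.
  specialize (Hmax t Ht). specialize (Hmin t Ht).
  unfold Rabs. repeat destruct Rcase_abs; lra.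
Qed.

Lemma loc_ac_mult f g : loc_ac f -> loc_ac g -> loc_ac (fun t => f t * g t).
Proof.
  intros Hf Hg a b Hab.
  destruct (loc_ac_bounded f a b Hf Hab) as [Mf Bf].
  destruct (loc_ac_bounded g a b Hg Hab) as [Mg Bg].
  assert (0 <= Mf) by (eapply Rle_trans; [apply Rabs_pos|apply (Bf a); lra]).
  assert (0 <= Mg) by (eapply Rle_trans; [apply Rabs_pos|apply (Bg a); lra]).
  apply ac_on_dominated with f g Mg Mf; auto.
  intros c d ? ? ?.
  replace (f d * g d - f c * g c) with (g c * (f d - f c) + f d * (g d - g c)) by ring.
  eapply Rle_trans; [apply Rabs_triang|]. rewrite !Rabs_mult.
  apply Rplus_le_compat; apply Rmult_le_compat_r; try apply Rabs_pos;
    [apply Bg|apply Bf]; lra.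
Qed.

#[local] Hint Resolve loc_ac_const loc_ac_id loc_ac_plus loc_ac_minus loc_ac_scal loc_ac_mult : loc_ac.

(* The identity would have zero derivative almost everywhere on [(al, be)]. *)
Lemma null_set_compl_dense N al be : null_set N -> al < be -> exists r, al < r < be /\ ~ N r.
Proof.
  intros HN Hab. apply NNPP; intros Hno.
  enough (al = be) by lra.
  apply (ac_on_deriv0_eq (fun t => t) al be N); [lra|now apply loc_ac_id; lra|exact HN|].
  intros t Ht HNt. exfalso; apply Hno. now exists t.
Qed.

Lemma loc_ac_eq_on_interval g N al be c : loc_ac g -> null_set N -> al < be ->
  (forall r, al < r < be -> ~ N r -> g r = c) -> forall s, al <= s <= be -> g s = c.
Proof.
  intros Hg HN Hab Hgc s Hs. apply NNPP; intros Hne.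
  assert (Hp : 0 < Rabs (g s - c)) by (apply Rabs_pos_lt; lra).
  destruct (loc_ac_continuity g Hg s _ Hp) as (del & Hdel & Hcont).
  destruct (null_set_compl_dense N (Rmax al (s - del / 2)) (Rmin be (s + del / 2)) HN)
    as (r & Hr & HNr).
  { unfold Rmax, Rmin. destruct (Rle_dec al (s - del / 2)), (Rle_dec be (s + del / 2)); lra. }
  pose proof (Rmax_l al (s - del / 2)). pose proof (Rmax_r al (s - del / 2)).
  pose proof (Rmin_l be (s + del / 2)). pose proof (Rmin_r be (s + del / 2)).
  destruct (Req_dec r s) as [<-|Hrs]; [apply Hne, Hgc; [lra|exact HNr]|].
  assert (Hdist : R_dist r s < del) by (unfold R_dist; apply Rabs_def1; lra).
  specialize (Hcont r (conj (conj I (not_eq_sym Hrs)) Hdist)). simpl in Hcont.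
  unfold R_dist in Hcont.
  rewrite (Hgc r), Rabs_minus_sym in Hcont by first [lra|exact HNr]. lra.
Qed.

Lemma deriv_val f t l l' : derivable_pt_lim f t l -> l = l' -> derivable_pt_lim f t l'.
Proof. now intros ? <-. Qed.

Ltac deriv := eapply deriv_val;
  [ repeat first [ eassumption | apply derivable_pt_lim_minus | apply derivable_pt_lim_plus
                 | apply derivable_pt_lim_mult | apply derivable_pt_lim_const
                 | apply derivable_pt_lim_id ]
  | cbv beta ].

Lemma derivable_pt_lim_locally_const g r al be : al < r < be ->
  (forall s, al < s < be -> g s = g r) -> derivable_pt_lim g r 0.
Proof.
  intros Hr Hc eps Heps.
  assert (Hpos : 0 < Rmin (r - al) (be - r)) by (apply Rmin_glb_lt; lra).
  exists (mkposreal _ Hpos). intros k Hk Hlt. simpl in Hlt.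
  pose proof (Rlt_le_trans _ _ _ Hlt (Rmin_l _ _)) as Hl.
  pose proof (Rlt_le_trans _ _ _ Hlt (Rmin_r _ _)) as Hr'.
  apply Rabs_def2 in Hl, Hr'. rewrite Hc by lra.
  unfold Rminus. rewrite Rplus_opp_r, Rdiv_0_l, Rplus_0_l, Ropp_0, Rabs_R0. exact Heps.
Qed.

Lemma loc_ac_affine g N p q k : loc_ac g -> null_set N ->
  (forall r, Rmin p q < r < Rmax p q -> ~ N r -> derivable_pt_lim g r k) ->
  g p - g q = k * (p - q).
Proof.
  intros Hg HN Hd.
  assert (Hmin_max : Rmin p q <= Rmax p q) by (unfold Rmin, Rmax; destruct (Rle_dec p q); lra).
  assert (Heq : g (Rmin p q) - k * Rmin p q = g (Rmax p q) - k * Rmax p q).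
  { apply (ac_on_deriv0_eq (fun t => g t - k * t) _ _ N Hmin_max);
      [apply loc_ac_minus; auto with loc_ac|exact HN|].
    intros t Ht HNt. pose proof (Hd t Ht HNt). deriv. ring. }
  unfold Rmin, Rmax in Heq. destruct (Rle_dec p q); lra.
Qed.

Lemma loc_ac_deriv0_const g N : loc_ac g -> null_set N ->
  (forall r, ~ N r -> derivable_pt_lim g r 0) -> forall t, g t = g 0.
Proof.
  intros Hg HN Hd t. enough (g t - g 0 = 0 * (t - 0)) by lra.
  apply loc_ac_affine with N; auto.
Qed.

Lemma interval_closure_between J t u s : nondeg_interval J -> J t -> in_closure J u ->
  Rmin t u < s < Rmax t u -> J s.
Proof.
  intros [HJ _] Ht Hu Hs.
  assert (Hsu : 0 < Rabs (s - u)) by (apply Rabs_pos_lt; unfold Rmin, Rmax in Hs;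
                                       destruct (Rle_dec t u); lra).
  destruct (Hu _ Hsu) as (s' & Hs' & Hd).
  unfold Rmin, Rmax in Hs. destruct (Rle_dec t u).
  - rewrite (Rabs_left (s - u)) in Hd by lra. apply Rabs_def2 in Hd. apply (HJ t s' s); auto; lra.
  - rewrite (Rabs_right (s - u)) in Hd by lra. apply Rabs_def2 in Hd. apply (HJ s' t s); auto; lra.
Qed.

Lemma r_unique F th r1 r2 : is_r F th r1 -> is_r F th r2 -> r1 = r2.
Proof.
  enough (Hle : forall r1 r2, is_r F th r1 -> is_r F th r2 -> r2 <= r1)
    by (intros; apply Rle_antisym; auto).
  clear r1 r2. intros r1 r2 (Hr1 & (w1 & w2 & Hw & Hr1w) & _) (Hr2 & _ & Hmax2).
  specialize (Hmax2 w1 w2 Hw).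
  assert (Hpos : 0 < cos th * w1 + sin th * w2).
  { apply Rnot_le_lt. intros Hneg.
    assert (0 <= r1 * - (cos th * w1 + sin th * w2)) by (apply Rmult_le_pos; lra). lra. }
  apply (Rmult_le_reg_r (cos th * w1 + sin th * w2)); [exact Hpos|lra].
Qed.

(** * First integrals of the extremal equations *)

Section Extremal.

Variables (F : R -> R -> R) (u1 u2 x y z v p1 p2 p3 p4 : R -> R) (N : R -> Prop).

Hypotheses (HN : null_set N) (Hx0 : x 0 = 0) (Hy0 : y 0 = 0) (Hz0 : z 0 = 0) (Hv0 : v 0 = 0)
  (ACx : loc_ac x) (ACy : loc_ac y) (ACz : loc_ac z) (ACv : loc_ac v)
  (AC1 : loc_ac p1) (AC2 : loc_ac p2) (AC3 : loc_ac p3) (AC4 : loc_ac p4).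

Hypothesis Hdyn : forall t, ~ N t ->
    derivable_pt_lim x t (u1 t) /\
    derivable_pt_lim y t (u2 t) /\
    derivable_pt_lim z t (/ 2 * (x t * u2 t - y t * u1 t)) /\
    derivable_pt_lim v t
      (- / 2 * (z t + / 6 * x t * y t) * u1 t + / 12 * x t ^ 2 * u2 t) /\
    derivable_pt_lim p1 t
      (/ 12 * p4 t * y t * u1 t - (/ 2 * p3 t + / 6 * p4 t * x t) * u2 t) /\
    derivable_pt_lim p2 t ((/ 2 * p3 t + / 12 * p4 t * x t) * u1 t) /\
    derivable_pt_lim p3 t (/ 2 * p4 t * u1 t) /\
    derivable_pt_lim p4 t 0 /\
    (let h1 := hh1 (p1 t) (p3 t) (p4 t) (x t) (y t) (z t) in
     let h2 := hh2 (p2 t) (p3 t) (p4 t) (x t) in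
     h1 * u1 t + h2 * u2 t = 1 /\
     forall w1 w2, inU F w1 w2 -> h1 * w1 + h2 * w2 <= 1).

Ltac regular_point t Ht :=
  destruct (Hdyn t Ht) as (dx & dy & dz & dv & dp1 & dp2 & dp3 & dp4 & Hham & _).

Lemma p4_const t : p4 t = p4 0.
Proof.
  apply (loc_ac_deriv0_const p4 N AC4 HN). intros r Hr. now regular_point r Hr.
Qed.

Lemma p3_integral t : p3 t = p3 0 + / 2 * p4 0 * x t.
Proof.
  set (g := fun t => p3 t - / 2 * p4 0 * x t).
  enough (Hc : g t = g 0) by (unfold g in Hc; rewrite Hx0 in Hc; lra).
  apply (loc_ac_deriv0_const g N); [unfold g; auto 10 with loc_ac|exact HN|].
  intros r Hr. regular_point r Hr. unfold g. deriv. rewrite (p4_const r). ring.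
Qed.

Lemma p2_integral t : p2 t = p2 0 + / 2 * p3 0 * x t + / 6 * p4 0 * (x t * x t).
Proof.
  set (g := fun t => p2 t - / 2 * p3 0 * x t - / 6 * p4 0 * (x t * x t)).
  enough (Hc : g t = g 0) by (unfold g in Hc; rewrite Hx0 in Hc; lra).
  apply (loc_ac_deriv0_const g N); [unfold g; auto 10 with loc_ac|exact HN|].
  intros r Hr. regular_point r Hr. unfold g. deriv.
  rewrite (p3_integral r), (p4_const r). field.
Qed.

Lemma p1_integral t :
  p1 t = p1 0 - / 2 * p3 0 * y t - / 6 * p4 0 * (x t * y t) - / 2 * p4 0 * z t.
Proof.
  set (g := fun t => p1 t + / 2 * p3 0 * y t + / 6 * p4 0 * (x t * y t) + / 2 * p4 0 * z t).
  enough (Hc : g t = g 0) by (unfold g in Hc; rewrite Hx0, Hy0, Hz0 in Hc; lra).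
  apply (loc_ac_deriv0_const g N); [unfold g; auto 10 with loc_ac|exact HN|].
  intros r Hr. regular_point r Hr. unfold g. deriv.
  rewrite (p3_integral r), (p4_const r). field.
Qed.

Lemma time_integral t :
  p1 0 * x t + p2 0 * y t + (2 * p3 0 + / 2 * p4 0 * x t) * z t + 3 * p4 0 * v t = t.
Proof.
  set (g := fun t =>
    p1 0 * x t + p2 0 * y t + (2 * p3 0 + / 2 * p4 0 * x t) * z t + 3 * p4 0 * v t - t).
  enough (Hc : g t = g 0) by (unfold g in Hc; rewrite Hx0, Hy0, Hz0, Hv0 in Hc; lra).
  apply (loc_ac_deriv0_const g N); [unfold g; auto 10 with loc_ac|exact HN|].
  intros r Hr. regular_point r Hr. unfold g. deriv.
  unfold hh1, hh2 in Hham.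
  rewrite (p1_integral r), (p2_integral r), (p3_integral r), (p4_const r) in Hham.
  lra.
Qed.

Definition h1 (t : R) : R := hh1 (p1 t) (p3 t) (p4 t) (x t) (y t) (z t).
Definition h2 (t : R) : R := hh2 (p2 t) (p3 t) (p4 t) (x t).

Lemma h1_deriv r : ~ N r -> derivable_pt_lim h1 r (- (p3 r + / 2 * p4 r * x r) * u2 r).
Proof.
  intros Hr. regular_point r Hr. unfold h1, hh1. deriv. field.
Qed.

Lemma h2_deriv r : ~ N r -> derivable_pt_lim h2 r ((p3 r + / 2 * p4 r * x r) * u1 r).
Proof.
  intros Hr. regular_point r Hr. unfold h2, hh2. deriv. field.
Qed.

Definition h_const_on (al be : R) : Prop :=
  forall s1 s2, al < s1 < be -> al < s2 < be -> h1 s1 = h1 s2 /\ h2 s1 = h2 s2.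

Hypothesis Hp4 : p4 0 <> 0.

(* With [w = p3 + p4 x / 2], a constant [h] gives [w u1 = w u2 = 0] by [h1_deriv]
   and [h2_deriv], hence [w = w (h . u) = 0]. *)
Lemma x_ae_on_h_const al be r : h_const_on al be -> al < r < be -> ~ N r ->
  x r = - p3 0 / p4 0.
Proof.
  intros Hc Hr HNr.
  assert (Hd1 : derivable_pt_lim h1 r 0).
  { apply derivable_pt_lim_locally_const with al be; auto. intros s Hs. apply Hc; auto. }
  assert (Hd2 : derivable_pt_lim h2 r 0).
  { apply derivable_pt_lim_locally_const with al be; auto. intros s Hs. apply Hc; auto. }
  pose proof (uniqueness_limite _ _ _ _ Hd1 (h1_deriv r HNr)) as W2.
  pose proof (uniqueness_limite _ _ _ _ Hd2 (h2_deriv r HNr)) as W1.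
  regular_point r HNr. fold (h1 r) (h2 r) in Hham.
  set (w := p3 r + / 2 * p4 r * x r) in *.
  assert (Hw : w = 0).
  { replace w with (w * (h1 r * u1 r + h2 r * u2 r)) by (rewrite Hham; ring).
    replace (w * (h1 r * u1 r + h2 r * u2 r)) with (h1 r * (w * u1 r) + h2 r * (w * u2 r)) by ring.
    rewrite <- W1. replace (w * u2 r) with 0 by lra. ring. }
  unfold w in Hw. rewrite (p3_integral r), (p4_const r) in Hw.
  assert (Hx : p4 0 * x r = - p3 0) by lra.
  rewrite <- Hx. field. exact Hp4.
Qed.

Lemma x_on_h_const al be : al < be -> h_const_on al be ->
  forall s, al <= s <= be -> x s = - p3 0 / p4 0.
Proof.
  intros Hab Hc. apply (loc_ac_eq_on_interval x N al be _ ACx HN Hab).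
  intros r Hr HNr. now apply (x_ae_on_h_const al be).
Qed.

Lemma controls_on_h_const al be r : h_const_on al be -> al < r < be -> ~ N r ->
  u1 r = 0 /\ (2 * p2 0 * p4 0 - p3 0 ^ 2) / (2 * p4 0) * u2 r = 1.
Proof.
  intros Hc Hr HNr.
  assert (Hx : forall s, al < s < be -> x s = - p3 0 / p4 0)
    by (intros s Hs; apply (x_on_h_const al be); auto; lra).
  assert (Hu1 : u1 r = 0).
  { regular_point r HNr. apply (uniqueness_limite x r); [exact dx|].
    apply derivable_pt_lim_locally_const with al be; [exact Hr|].
    intros s Hs. now rewrite (Hx s Hs), (Hx r Hr). }
  split; [exact Hu1|].
  regular_point r HNr. rewrite Hu1 in Hham. unfold hh2 in Hham.
  rewrite (p2_integral r), (p3_integral r), (p4_const r), (Hx r Hr) in Hham.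
  rewrite <- Hham. field. exact Hp4.
Qed.

Lemma discriminant_neq0 al be : al < be -> h_const_on al be -> 2 * p2 0 * p4 0 - p3 0 ^ 2 <> 0.
Proof.
  intros Hab Hc HD.
  destruct (null_set_compl_dense N al be HN Hab) as (r & Hr & HNr).
  destruct (controls_on_h_const al be r Hc Hr HNr) as [_ Hu2].
  rewrite HD in Hu2. unfold Rdiv in Hu2. rewrite !Rmult_0_l in Hu2. lra.
Qed.

Lemma trajectory_on_h_const t t0 : h_const_on (Rmin t t0) (Rmax t t0) ->
  2 * p2 0 * p4 0 - p3 0 ^ 2 <> 0 ->
  y t = y t0 + 2 * p4 0 * (t - t0) / (2 * p2 0 * p4 0 - p3 0 ^ 2) /\
  z t = z t0 + p3 0 * (t - t0) / (p3 0 ^ 2 - 2 * p2 0 * p4 0) /\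
  v t = v t0 + p3 0 ^ 2 * (t - t0) / (6 * p4 0 * (2 * p2 0 * p4 0 - p3 0 ^ 2)).
Proof.
  intros Hc HD.
  set (x0 := - p3 0 / p4 0). set (c := 2 * p4 0 / (2 * p2 0 * p4 0 - p3 0 ^ 2)).
  assert (Hreg : forall r, Rmin t t0 < r < Rmax t t0 -> ~ N r ->
            u1 r = 0 /\ u2 r = c /\ x r = x0).
  { intros r Hr HNr.
    destruct (controls_on_h_const _ _ r Hc Hr HNr) as [Hu1 Hu2].
    split; [exact Hu1|split].
    - replace (u2 r) with ((2 * p2 0 * p4 0 - p3 0 ^ 2) / (2 * p4 0) * u2 r * c)
        by (unfold c; field; split; assumption).
      rewrite Hu2. ring.
    - apply (x_on_h_const (Rmin t t0) (Rmax t t0)); auto; lra. }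
  assert (Hy : y t - y t0 = c * (t - t0)).
  { apply loc_ac_affine with N; auto. intros r Hr HNr.
    destruct (Hreg r Hr HNr) as (_ & <- & _). now regular_point r HNr. }
  assert (Hz : z t - z t0 = / 2 * x0 * c * (t - t0)).
  { apply loc_ac_affine with N; auto. intros r Hr HNr.
    destruct (Hreg r Hr HNr) as (Hu1 & Hu2 & Hx). regular_point r HNr.
    eapply deriv_val; [exact dz|]. rewrite Hu1, Hu2, Hx. ring. }
  assert (Hv : v t - v t0 = / 12 * x0 ^ 2 * c * (t - t0)).
  { apply loc_ac_affine with N; auto. intros r Hr HNr.
    destruct (Hreg r Hr HNr) as (Hu1 & Hu2 & Hx). regular_point r HNr.
    eapply deriv_val; [exact dv|]. rewrite Hu1, Hu2, Hx. ring. }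
  assert (p3 0 ^ 2 - 2 * p2 0 * p4 0 <> 0) by lra.
  unfold x0, c in *. split; [|split].
  - replace (y t) with (y t0 + (y t - y t0)) by ring. rewrite Hy. field. auto.
  - replace (z t) with (z t0 + (z t - z t0)) by ring. rewrite Hz. field. auto.
  - replace (v t) with (v t0 + (v t - v t0)) by ring. rewrite Hv. field. auto.
Qed.

End Extremal.

Lemma h_const_on_closure_interval F (x y z p1 p2 p3 p4 theta : R -> R) J t u :
  (forall t, exists rho, is_r F (theta t) rho /\
      hh1 (p1 t) (p3 t) (p4 t) (x t) (y t) (z t) = rho * cos (theta t) /\
      hh2 (p2 t) (p3 t) (p4 t) (x t) = rho * sin (theta t)) ->
  nondeg_interval J -> (forall s1 s2, J s1 -> J s2 -> theta s1 = theta s2) ->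
  J t -> in_closure J u -> h_const_on x y z p1 p2 p3 p4 (Rmin t u) (Rmax t u).
Proof.
  intros Hrho HJ Htheta Ht Hu s1 s2 Hs1 Hs2.
  destruct (Hrho s1) as (r1 & Hr1 & Ha1 & Hb1), (Hrho s2) as (r2 & Hr2 & Ha2 & Hb2).
  rewrite (Htheta s1 s2) in Hr1, Ha1, Hb1 by (eapply interval_closure_between; eauto).
  rewrite (r_unique F _ _ _ Hr1 Hr2) in Ha1, Hb1.
  unfold h1, h2. split; congruence.
Qed.

Theorem lemma1
  (F : R -> R -> R) (u1 u2 x y z v p1 p2 p3 p4 : R -> R)
  (theta : R -> R) (J : R -> Prop) (t0 : R) :
  is_norm2 F ->
  normal_extremal F u1 u2 x y z v p1 p2 p3 p4 ->
  p4 0 <> 0 ->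
  continuity theta ->
  (forall t, exists rho, is_r F (theta t) rho /\
      hh1 (p1 t) (p3 t) (p4 t) (x t) (y t) (z t) = rho * cos (theta t) /\
      hh2 (p2 t) (p3 t) (p4 t) (x t) = rho * sin (theta t)) ->
  nondeg_interval J ->
  (forall s1 s2, J s1 -> J s2 -> theta s1 = theta s2) ->
  in_closure J t0 ->
  (forall s, in_closure J s -> Rabs t0 <= Rabs s) ->
  let f1 := p1 0 in let f2 := p2 0 in let f3 := p3 0 in let f4 := p4 0 in
  let x0 := - f3 / f4 in
  2 * f2 * f4 - f3 ^ 2 <> 0 /\
  (forall t, J t ->
     x t = x0 /\
     y t = y t0 + 2 * f4 * (t - t0) / (2 * f2 * f4 - f3 ^ 2) /\
     z t = z t0 + f3 * (t - t0) / (f3 ^ 2 - 2 * f2 * f4) /\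
     v t = v t0 + f3 ^ 2 * (t - t0) / (6 * f4 * (2 * f2 * f4 - f3 ^ 2))) /\
  f1 * x0 + f2 * y t0 + (2 * f3 + / 2 * f4 * x0) * z t0 + 3 * f4 * v t0 = t0 /\
  (f3 = 0 ->
     (forall t, J t ->
        x t = 0 /\ y t = y t0 + (t - t0) / f2 /\ z t = z t0 /\ v t = v t0) /\
     v t0 = (t0 - f2 * y t0) / (3 * f4)).
Proof.
  intros _ Hext Hp4 _ Hrho HJ Htheta Ht0 _. cbv zeta.
  destruct Hext as (_ & Hx0 & Hy0 & Hz0 & Hv0 & ACx & ACy & ACz & ACv & AC1 & AC2 & AC3 & AC4
                    & _ & N & HN & Hdyn).
  assert (Hconst : forall t u, J t -> in_closure J u ->
            h_const_on x y z p1 p2 p3 p4 (Rmin t u) (Rmax t u))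
    by (intros; eapply h_const_on_closure_interval; eauto).
  assert (Hin : forall t, J t -> in_closure J t)
    by (intros t Ht eps Heps; exists t; rewrite Rminus_diag, Rabs_R0; auto).
  destruct HJ as [_ (ja & jb & Hja & Hjb & Hjab)].
  assert (HD : 2 * p2 0 * p4 0 - p3 0 ^ 2 <> 0).
  { apply (discriminant_neq0 F u1 u2 x y z v p1 p2 p3 p4 N) with (Rmin ja jb) (Rmax ja jb);
      auto; unfold Rmin, Rmax; destruct (Rle_dec ja jb); lra. }
  assert (Hx : forall t, in_closure J t -> x t = - p3 0 / p4 0).
  { intros t Ht.
    assert (Hs : exists s, J s /\ s <> t)
      by (destruct (Req_dec t ja); [exists jb|exists ja]; split; auto; lra).
    destruct Hs as (s & Hs & Hst).
    apply (x_on_h_const F u1 u2 x y z v p1 p2 p3 p4 N) with (Rmin s t) (Rmax s t);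
      auto; unfold Rmin, Rmax; destruct (Rle_dec s t); lra. }
  assert (Htime : p1 0 * (- p3 0 / p4 0) + p2 0 * y t0
                  + (2 * p3 0 + / 2 * p4 0 * (- p3 0 / p4 0)) * z t0 + 3 * p4 0 * v t0 = t0)
    by (rewrite <- (Hx t0 Ht0); apply (time_integral F u1 u2 x y z v p1 p2 p3 p4 N); auto).
  split; [exact HD|split; [|split; [exact Htime|]]].
  - intros t Ht. split; [auto|]. apply (trajectory_on_h_const F u1 u2 x y z v p1 p2 p3 p4 N); auto.
  - intros H3. assert (Hp2 : p2 0 <> 0) by (intros H2; apply HD; rewrite H2, H3; ring).
    split.
    + intros t Ht.
      destruct (trajectory_on_h_const F u1 u2 x y z v p1 p2 p3 p4 N) with t t0
        as (Hy & Hz & Hv); auto.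
      rewrite Hx, Hy, Hz, Hv, H3 by auto. split; [|split; [|split]]; field; auto.
    + rewrite H3 in Htime. apply (Rmult_eq_reg_l (3 * p4 0)); [|lra].
      field_simplify; [lra|auto].
Qed.
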